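(* For every integer $m\ge 0$, \[ {}_{H}w_{m+1}(x)=w_{m+1}(x)+m\,x\,w_{m}(x)+(1+x)\sum_{k=0}^{m-2}\binom{m}{k}w_{m-k-1}(x)\,w_{k+1}(x) \] (empty sums being $0$). Moreover, for every integer $n\ge 2$, \[ \frac{x}{1+x}\sum_{k=0}^{n}\binom{n}{k}\,{}_{H}w_{k+1}(x)={}_{H}w_{n+1}(x)-{}_{H}w_{n}(x)-w_{n}(x)+w_{n-1}(x). \]
   Context: $\genfrac{\{}{\}}{0pt}{}{n}{k}$ denotes the Stirling numbers of the second kind. The geometric polynomials are $w_n(x)=\sum_{k=0}^{n}\genfrac{\{}{\}}{0pt}{}{n}{k}k!\,x^k$. With $H_k=\sum_{i=1}^k 1/i$, the harmonic geometric polynomials are ${}_{H}w_n(x)=\sum_{k=1}^{n}\genfrac{\{}{\}}{0pt}{}{n}{k}k!\,H_k\,x^k$. *)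

From HB Require Import structures.
From mathcomp Require Import all_boot all_order all_algebra.
Unset Implicit Arguments. Unset Printing Implicit Defensive.
Import Order.TTheory GRing.Theory Num.Theory.
Local Open Scope ring_scope.

Fixpoint stirling2 (n k : nat) : nat :=
  match n, k with
  | 0, 0 => 1
  | 0, _.+1 => 0
  | _.+1, 0 => 0
  | n'.+1, k'.+1 => k'.+1 * stirling2 n' k'.+1 + stirling2 n' k'
  end%N.

Definition harmonic (R : numFieldType) (k : nat) : R :=
  \sum_(1 <= i < k.+1) (i%:R)^-1.

Definition geom_poly {R : numFieldType} (n : nat) (x : R) : R :=
  \sum_(0 <= k < n.+1) ((stirling2 n k * k`!)%N)%:R * x ^+ k.

Definition harm_geom_poly {R : numFieldType} (n : nat) (x : R) : R :=
  \sum_(1 <= k < n.+1) ((stirling2 n k * k`!)%N)%:R * harmonic R k * x ^+ k.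

From HB Require Import structures.
From mathcomp Require Import all_boot all_order all_algebra.
From mathcomp Require Import ring zify.
Import Order.TTheory GRing.Theory Num.Theory.
Local Open Scope ring_scope.

(* Both identities are polynomial identities evaluated at x.  With
   D = x(1+x) d/dx and E_a p = D p + a p, the geometric polynomials satisfy
   w_(n+1) = E_x w_n and the harmonic ones Hw_(n+1) = E_x Hw_n + x w_n; comparing
   coefficients recovers the Stirling sums of the definitions.  As D is a
   derivation, E_(a+b) (p q) = (E_a p) q + p (E_b q), so binomial convolutions
   sum_k C(n,k) f_(n-k) g_k of E-recursive sequences are again E-recursive.  This
   gives (1+x) sum_k C(m,k) w_(m-k) w_k = w_(m+1) + w_m and
   Hw_n = (1+x) sum_k C(n,k) w_(n-k) w_(k-1) - n w_(n-1), whence the first identity.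
   For the second, multiplication by x (resp. 1+x) conjugates E_(1+x) (resp. E_x)
   to D, so the difference d_n between the two sides of
   x sum_k C(n,k) Hw_(k+1) = (1+x) (Hw_(n+1) - Hw_n - w_n + w_(n-1))
   satisfies d_(n+1) = D d_n; since d_1 = -1 is constant, d_n = 0 for n >= 2. *)

Lemma stirling2_small (n k : nat) : (n < k)%N -> stirling2 n k = 0%N.
Proof.
elim: n k => [|n IHn] [|k] //= /[!ltnS] ltnk.
by rewrite IHn ?IHn ?muln0 //; apply: ltnW.
Qed.

Definition nsurj (n k : nat) : nat := (stirling2 n k * k`!)%N.

Lemma nsurj_small (n k : nat) : (n < k)%N -> nsurj n k = 0%N.
Proof. by move=> /stirling2_small; rewrite /nsurj => ->. Qed.

Lemma nsurj0 (k : nat) : nsurj 0 k = (k == 0)%N.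
Proof. by case: k. Qed.

Lemma nsurjSS (n k : nat) : nsurj n.+1 k.+1 = (k.+1 * (nsurj n k.+1 + nsurj n k))%N.
Proof. rewrite /nsurj /= factS; nia. Qed.

Section GeometricPolynomials.

Variable R : comNzRingType.
Implicit Types (a b p q : {poly R}) (n k : nat).

Definition Dop p : {poly R} := 'X * (1 + 'X) * p^`().

Definition Eop a p : {poly R} := Dop p + a * p.

Lemma DopD p q : Dop (p + q) = Dop p + Dop q.
Proof. by rewrite /Dop derivD mulrDr. Qed.

Lemma DopB p q : Dop (p - q) = Dop p - Dop q.
Proof. by rewrite /Dop derivB mulrBr. Qed.

Lemma DopM p q : Dop (p * q) = Dop p * q + p * Dop q.
Proof. rewrite /Dop derivM; ring. Qed.

Lemma DopC (c : R) : Dop c%:P = 0.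
Proof. by rewrite /Dop derivC mulr0. Qed.

Lemma Dop0 : Dop 0 = 0.
Proof. exact: DopC. Qed.

Lemma Dop1 : Dop 1 = 0.
Proof. exact: DopC. Qed.

Lemma Dop_nat n : Dop n%:R = 0.
Proof. by rewrite -polyC_natr DopC. Qed.

Lemma DopX : Dop 'X = 'X * (1 + 'X).
Proof. by rewrite /Dop derivX mulr1. Qed.

Lemma Dop_sum m n (F : nat -> {poly R}) :
  Dop (\sum_(m <= k < n) F k) = \sum_(m <= k < n) Dop (F k).
Proof. exact: (big_morph Dop DopD Dop0). Qed.

Lemma coef_Dop0 p : (Dop p)`_0 = 0.
Proof. by rewrite /Dop -mulrA coefXM. Qed.

Lemma coef_DopS p k : (Dop p)`_k.+1 = p`_k.+1 *+ k.+1 + p`_k *+ k.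
Proof.
rewrite /Dop -mulrA coefXM /= mulrDl mul1r coefD coefXM !coef_deriv.
by case: k => [|k] //=; rewrite !mulr0n addr0.
Qed.

Lemma EopD a p q : Eop a (p + q) = Eop a p + Eop a q.
Proof. rewrite /Eop DopD; ring. Qed.

Lemma EopB a p q : Eop a (p - q) = Eop a p - Eop a q.
Proof. rewrite /Eop DopB; ring. Qed.

Lemma Eop0 a : Eop a 0 = 0.
Proof. by rewrite /Eop Dop0 mulr0 addr0. Qed.

Lemma Eop_natM a p n : Eop a (n%:R * p) = n%:R * Eop a p.
Proof. rewrite /Eop DopM Dop_nat; ring. Qed.

Lemma Eop11 : Eop 1 1 = 1.
Proof. by rewrite /Eop Dop1 mulr1 add0r. Qed.

Lemma Dop_mulX p : Dop ('X * p) = 'X * Eop (1 + 'X) p.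
Proof. rewrite /Eop DopM DopX; ring. Qed.

Lemma Dop_mul1X p : Dop ((1 + 'X) * p) = (1 + 'X) * Eop 'X p.
Proof. rewrite /Eop DopM DopD Dop1 DopX; ring. Qed.

Lemma Eop_mul1X p : Eop 'X ((1 + 'X) * p) = (1 + 'X) * Eop ('X + 'X) p.
Proof. rewrite /Eop Dop_mul1X /Eop; ring. Qed.

Fixpoint wpoly n : {poly R} := if n is n'.+1 then Eop 'X (wpoly n') else 1.

Fixpoint hwpoly n : {poly R} :=
  if n is n'.+1 then Eop 'X (hwpoly n') + 'X * wpoly n' else 0.

Lemma wpolyS n : wpoly n.+1 = Eop 'X (wpoly n).
Proof. by []. Qed.

Lemma hwpolyS n : hwpoly n.+1 = Eop 'X (hwpoly n) + 'X * wpoly n.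
Proof. by []. Qed.

Lemma wpoly1 : wpoly 1 = 'X.
Proof. by rewrite /= /Eop Dop1 mulr1 add0r. Qed.

Lemma coef_wpoly n k : (wpoly n)`_k = (nsurj n k)%:R.
Proof.
elim: n k => [|n IHn] [|k].
- by rewrite coef1.
- by rewrite coef1 nsurj0.
- by rewrite coefD coef_Dop0 coefXM add0r.
rewrite coefD coef_DopS coefXM !IHn nsurjSS /=.
rewrite natrM natrD; ring.
Qed.

Lemma size_wpoly n : (size (wpoly n) <= n.+1)%N.
Proof. by apply/leq_sizeP => k ltnk; rewrite coef_wpoly nsurj_small. Qed.

Definition bconv (f g : nat -> {poly R}) n : {poly R} :=
  \sum_(0 <= k < n.+1) 'C(n, k)%:R * f (n - k)%N * g k.

Lemma bconvS (f g : nat -> {poly R}) n :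
  bconv f g n.+1 =
  \sum_(0 <= k < n.+1) 'C(n, k)%:R * (f (n.+1 - k)%N * g k + f (n - k)%N * g k.+1).
Proof.
rewrite /bconv big_nat_recl // bin0 subn0.
under eq_big_nat => i _ do rewrite binS natrD subSS !mulrDl.
rewrite big_split /= addrA.
under [RHS]eq_big_nat => i _ do rewrite mulrDr.
rewrite big_split /=; congr (_ + _); last by apply: eq_bigr => i _; rewrite mulrA.
rewrite big_nat_recr //= bin_small // !mul0r addr0.
rewrite [RHS]big_nat_recl // bin0 subn0 !mul1r.
by congr (_ + _); apply: eq_bigr => i _; rewrite subSS mulrA.
Qed.

Lemma bconv0r (f : nat -> {poly R}) n : bconv f (fun=> 0) n = 0.
Proof. by rewrite /bconv big1 // => k _; rewrite mulr0. Qed.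

Lemma bconvS_Eop (f g e : nat -> {poly R}) a b n :
  (forall i, f i.+1 = Eop a (f i)) -> (forall k, g k.+1 = Eop b (g k) + e k) ->
  bconv f g n.+1 = Eop (a + b) (bconv f g n) + bconv f e n.
Proof.
move=> fS gS; rewrite bconvS /bconv /Eop Dop_sum mulr_sumr -!big_split /=.
apply: eq_big_nat => k /andP[_ lekn].
rewrite subSn // fS gS /Eop !DopM Dop_nat; ring.
Qed.

Lemma bconv_wpoly_rec n :
  bconv wpoly wpoly n.+1 = Eop ('X + 'X) (bconv wpoly wpoly n).
Proof.
rewrite (bconvS_Eop _ _ (fun=> 0) 'X 'X) ?bconv0r ?addr0 // => k.
by rewrite addr0.
Qed.

Lemma mul1X_bconv_wpoly n : (1 + 'X) * bconv wpoly wpoly n = wpoly n.+1 + wpoly n.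
Proof.
elim: n => [|n IHn].
  by rewrite /bconv big_nat1 bin0 subn0 wpoly1 [wpoly 0]/= !mulr1 addrC.
by rewrite bconv_wpoly_rec -Eop_mul1X IHn EopD.
Qed.

Definition wpoly_pred k : {poly R} := if k is k'.+1 then wpoly k' else 0.

Lemma bconv_wpoly_pred_rec n :
  bconv wpoly wpoly_pred n.+1 = Eop ('X + 'X) (bconv wpoly wpoly_pred n) + wpoly n.
Proof.
rewrite (bconvS_Eop _ _ (fun k => if k is 0 then 1 else 0) 'X 'X) => [|//|[|k]]; last first.
- by rewrite addr0.
- by rewrite /= Eop0 add0r.
congr (_ + _); rewrite /bconv big_nat_recl // big1 ?addr0 => [|k _]; last by rewrite mulr0.
by rewrite bin0 subn0 mulr1 mul1r.
Qed.

Lemma hwpoly_bconv n :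
  hwpoly n = (1 + 'X) * bconv wpoly wpoly_pred n - n%:R * wpoly n.-1.
Proof.
elim: n => [|n IHn]; first by rewrite /bconv big_nat1 !mulr0 mul0r subr0.
rewrite hwpolyS IHn EopB Eop_mul1X Eop_natM bconv_wpoly_pred_rec.
have -> : n%:R * Eop 'X (wpoly n.-1) = n%:R * wpoly n.
  by case: n {IHn} => [|n]; rewrite ?mul0r.
rewrite -natr1; ring.
Qed.

Lemma sum_binom_wpoly_wpoly_pred m :
  \sum_(0 <= k < m.+1) 'C(m, k)%:R * wpoly (m.+1 - k)%N * wpoly_pred k =
  m%:R * wpoly m + \sum_(0 <= k < m.-1) 'C(m, k)%:R * wpoly (m - k - 1)%N * wpoly k.+1.
Proof.
rewrite big_nat_recl // mulr0 add0r.
case: m => [|m]; first by rewrite !big_geq // mul0r addr0.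
rewrite big_nat_recl // bin1 subn1 mulr1 [m.+1.-1]/=; congr (_ + _).
rewrite [RHS]big_nat_rev; apply: eq_big_nat => i /andP[_ ltim].
rewrite add0n -bin_sub ?subSS; last by lia.
have -> : (m.+1 - (m - i.+1) - 1 = i.+1)%N by lia.
have -> : (m - i.+1).+1 = (m - i)%N by lia.
by rewrite mulrAC.
Qed.

Lemma hwpolyS_expand m :
  hwpoly m.+1 = wpoly m.+1 + m%:R * 'X * wpoly m
     + (1 + 'X) * \sum_(0 <= k < m.-1) 'C(m, k)%:R * wpoly (m - k - 1)%N * wpoly k.+1.
Proof.
rewrite hwpoly_bconv bconvS.
under eq_big_nat => k _ do rewrite mulrDr !mulrA.
rewrite big_split sum_binom_wpoly_wpoly_pred.
rewrite -[\sum_(0 <= k < m.+1) _ * wpoly_pred k.+1]/(bconv wpoly wpoly m).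
rewrite mulrDr mul1X_bconv_wpoly -natr1; ring.
Qed.

Definition wbinom n := bconv (fun=> 1) (fun k => wpoly k.+1) n.

Lemma wbinomS n : wbinom n.+1 = Eop (1 + 'X) (wbinom n).
Proof.
rewrite /wbinom (bconvS_Eop _ _ (fun=> 0) 1 'X) ?bconv0r ?addr0 // => [i|k].
  by rewrite Eop11.
by rewrite addr0.
Qed.

Lemma mulX_wbinom n : 'X * wbinom n.+1 = (1 + 'X) * (wpoly n.+2 - wpoly n.+1).
Proof.
elim: n => [|n IHn]; last by rewrite wbinomS -Dop_mulX IHn Dop_mul1X EopB.
rewrite wbinomS /wbinom /bconv big_nat1 bin0 !mulr1 mul1r.
rewrite -[wpoly 2]/(Eop _ (wpoly 1)) wpoly1 /Eop DopX; ring.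
Qed.

Definition hbinom n := bconv (fun=> 1) (fun k => hwpoly k.+1) n.

Lemma hbinomS n : hbinom n.+1 = Eop (1 + 'X) (hbinom n) + 'X * wbinom n.
Proof.
rewrite /hbinom (bconvS_Eop _ _ (fun k => 'X * wpoly k.+1) 1 'X) // => [|i].
  by rewrite /bconv mulr_sumr; congr (_ + _); apply: eq_bigr => k _; ring.
by rewrite Eop11.
Qed.

Definition hdiff n := hwpoly n.+1 - hwpoly n - wpoly n + wpoly n.-1.

Lemma Eop_hwpoly n : Eop 'X (hwpoly n) = hwpoly n.+1 - 'X * wpoly n.
Proof. by rewrite hwpolyS addrK. Qed.

Lemma Eop_hdiff n : Eop 'X (hdiff n.+1) = hdiff n.+2 - 'X * (wpoly n.+2 - wpoly n.+1).
Proof.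
rewrite /hdiff EopD EopB EopB !Eop_hwpoly -!wpolyS [n.+1.-1]/= [n.+2.-1]/=; ring.
Qed.

Lemma mulX_hbinomS_sub n :
  'X * hbinom n.+2 - (1 + 'X) * hdiff n.+2 =
  Dop ('X * hbinom n.+1 - (1 + 'X) * hdiff n.+1).
Proof.
rewrite hbinomS mulrDr -Dop_mulX mulX_wbinom DopB Dop_mul1X Eop_hdiff; ring.
Qed.

Lemma mulX_hbinom n : 'X * hbinom n.+2 = (1 + 'X) * hdiff n.+2.
Proof.
apply/eqP; rewrite -subr_eq0; apply/eqP.
elim: n => [|n IHn]; rewrite mulX_hbinomS_sub ?IHn ?Dop0 //.
suff -> : 'X * hbinom 1 - (1 + 'X) * hdiff 1 = - 1 by rewrite -polyCN DopC.
rewrite /hbinom /hdiff /bconv big_nat_recr // big_nat1 /=.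
rewrite bin0 binn !Eop0 !add0r !mulr1 /Eop Dop1 DopX; ring.
Qed.

End GeometricPolynomials.

Section Evaluation.

Variable R : numFieldType.

Lemma harmonic0 : harmonic R 0 = 0.
Proof. by rewrite /harmonic big_geq. Qed.

Lemma harmonicS k : harmonic R k.+1 = harmonic R k + k.+1%:R^-1.
Proof. by rewrite /harmonic big_nat_recr. Qed.

Lemma coef_hwpoly n k : (hwpoly R n)`_k = (nsurj n k)%:R * harmonic R k.
Proof.
elim: n k => [|n IHn] [|k].
- by rewrite coef0 harmonic0 mulr0.
- by rewrite coef0 nsurj0 mul0r.
- by rewrite hwpolyS !coefD coef_Dop0 !coefXM harmonic0 !mulr0 !addr0.
rewrite hwpolyS !coefD coef_DopS !coefXM /= !IHn coef_wpoly nsurjSS harmonicS.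
rewrite natrM natrD; field; by rewrite addrC natr1 pnatr_eq0.
Qed.

Lemma size_hwpoly n : (size (hwpoly R n) <= n.+1)%N.
Proof. by apply/leq_sizeP => k ltnk; rewrite coef_hwpoly nsurj_small ?mul0r. Qed.

Lemma geom_polyE n (x : R) : geom_poly n x = (wpoly R n).[x].
Proof.
rewrite (horner_coef_wide x (size_wpoly R n)) /geom_poly big_mkord.
by apply: eq_bigr => k _; rewrite coef_wpoly.
Qed.

Lemma harm_geom_polyE n (x : R) : harm_geom_poly n x = (hwpoly R n).[x].
Proof.
rewrite (horner_coef_wide x (size_hwpoly n)) big_ord_recl coef_hwpoly harmonic0.
rewrite mulr0 mul0r add0r /harm_geom_poly big_add1 big_mkord.
by apply: eq_bigr => k _; rewrite coef_hwpoly.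
Qed.

Lemma horner_hbinom n (x : R) :
  (hbinom R n).[x] = \sum_(0 <= k < n.+1) 'C(n, k)%:R * harm_geom_poly k.+1 x.
Proof.
rewrite /hbinom /bconv horner_sum; apply: eq_bigr => k _.
by rewrite harm_geom_polyE mulr1 -polyC_natr hornerM hornerC.
Qed.

Lemma horner_hdiff n (x : R) :
  (hdiff R n).[x] =
  harm_geom_poly n.+1 x - harm_geom_poly n x - geom_poly n x + geom_poly n.-1 x.
Proof. by rewrite /hdiff 3!hornerD 2!hornerN -!harm_geom_polyE -!geom_polyE. Qed.

End Evaluation.

Theorem proposition3 (R : numFieldType) (x : R) :
  (forall m : nat,
     harm_geom_poly m.+1 x =
       geom_poly m.+1 x + m%:R * x * geom_poly m x
       + (1 + x) * \sum_(0 <= k < m.-1)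
                     'C(m, k)%:R * geom_poly (m - k - 1) x * geom_poly k.+1 x)
  /\
  (1 + x != 0 ->
   forall n : nat, (2 <= n)%N ->
     x / (1 + x) * \sum_(0 <= k < n.+1) 'C(n, k)%:R * harm_geom_poly k.+1 x =
       harm_geom_poly n.+1 x - harm_geom_poly n x
       - geom_poly n x + geom_poly n.-1 x).
Proof.
split=> [m | x1_neq0 n le2n].
  under eq_bigr => k _ do rewrite !geom_polyE.
  rewrite harm_geom_polyE hwpolyS_expand !geom_polyE.
  (* Abstracting [wpoly R] keeps [hornerE] from unfolding the fixpoint. *)
  move: (wpoly R) => W.
  rewrite -!polyC_natr !hornerE horner_sum; congr (_ + _ * _).
  by apply: eq_bigr => k _; rewrite -polyC_natr !hornerE.
case: n le2n => [|[|n]] // _.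
have := congr1 (horner^~ x) (mulX_hbinom R n).
rewrite 2!hornerM horner_hbinom horner_hdiff hornerX hornerD hornerC hornerX /= => eq_x.
by rewrite mulrAC eq_x mulrAC divff // mul1r.
Qed.
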